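(* Let $(S,\Delta,\mathbb{P})$ be a probability space, $(U,d)$ a separable metric space, $\mathfrak{X}$ the set of $U$-valued random variables on $S$, $\mathcal{I}$ an ideal on $\mathbb{N}$, and $\underline{X}=\{X_n\}$ a sequence in $\mathfrak{X}$. If $\mathfrak{B}$ is a compact subset of $(\mathfrak{X}^0,\rho)$ such that $\{n\in\mathbb{N}:X_n\in\mathfrak{B}\}\notin\mathcal{I}$, then $\Gamma^{r^s}_{\underline{X}}(\mathcal{I}^{\mathbb{P}})\neq\varnothing$ for every $r>0$.
   Context: The Ky Fan metric is $\rho(X,Y)=\inf\{\varepsilon>0:\mathbb{P}(d(X,Y)>\varepsilon)\leq\varepsilon\}$; $\mathfrak{X}^0$ is the set of equivalence classes of $\mathfrak{X}$ under almost sure equality, on which $\rho$ is a metric. An ideal on $\mathbb{N}$ is a family $\mathcal{I}\subseteq\mathcal{P}(\mathbb{N})$ with $\varnothing\in\mathcal{I}$, closed under finite unions and under subsets. $\Gamma^{r^s}_{\underline{X}}(\mathcal{I}^{\mathbb{P}})$ (strong rough $\mathcal{I}$-cluster points in probability) is the set of $Y\in\mathfrak{X}$ with $\{n:\mathbb{P}(d(X_n,Y)<r+\varepsilon)>1-\delta\}\notin\mathcal{I}$ for all $\varepsilon,\delta>0$. *)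

From HB Require Import structures.
From mathcomp Require Import all_boot all_order all_algebra.
From mathcomp Require Import all_classical all_reals all_analysis.
Set Implicit Arguments. Unset Strict Implicit. Unset Printing Implicit Defensive.
Import Order.TTheory GRing.Theory Num.Theory.
Local Open Scope classical_set_scope.
Local Open Scope ring_scope.

Section Defs.
Context {R : realType}.

Definition is_metric {U : Type} (d : U -> U -> R) : Prop :=
  [/\ forall x y, 0 <= d x y,
      forall x y, d x y = 0 <-> x = y,
      forall x y, d x y = d y x &
      forall x y z, d x z <= d x y + d y z].

Definition separable_metric {U : Type} (d : U -> U -> R) : Prop :=
  exists D : set U, countable D /\
    forall x (e : R), 0 < e -> exists2 y, D y & d x y < e.

Definition metric_open {U : Type} (d : U -> U -> R) (A : set U) : Prop :=
  forall x, A x -> exists2 e : R, 0 < e & forall y, d x y < e -> A y.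

Definition borel_d {U : Type} (d : U -> U -> R) : set (set U) :=
  <<s metric_open d >>.

Definition random_var {dS : measure_display} {S : measurableType dS}
  {U : Type} (d : U -> U -> R) (X : S -> U) : Prop :=
  forall B, borel_d d B -> measurable (X @^-1` B).

Definition ky_fan {dS : measure_display} {S : measurableType dS}
  (P : probability S R) {U : Type} (d : U -> U -> R) (X Y : S -> U) : R :=
  inf [set e : R | 0 < e /\ lee (P [set s | e < d (X s) (Y s)]) e%:E].

Definition as_eq {dS : measure_display} {S : measurableType dS}
  (P : probability S R) {U : Type} (X Y : S -> U) : Prop :=
  P.-negligible [set s | X s <> Y s].

Definition rho_open {dS : measure_display} {S : measurableType dS}
  (P : probability S R) {U : Type} (d : U -> U -> R) (O : set (S -> U)) : Prop :=
  forall X, random_var d X -> O X ->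
    exists2 e : R, 0 < e &
      forall Y, random_var d Y -> ky_fan P d X Y < e -> O Y.

(* A subset of frak X^0, represented as a set of random variables that is
   saturated w.r.t. almost sure equality, and compact for rho
   (every open cover has a finite subcover). *)
Definition rho_compact_class {dS : measure_display} {S : measurableType dS}
  (P : probability S R) {U : Type} (d : U -> U -> R) (B : set (S -> U)) : Prop :=
  [/\ B `<=` random_var d,
      (forall X Y, random_var d X -> random_var d Y -> as_eq P X Y -> B X -> B Y) &
      forall (I : Type) (O : I -> set (S -> U)),
        (forall i, rho_open P d (O i)) ->
        B `<=` \bigcup_i O i ->
        exists F : set I, finite_set F /\ B `<=` \bigcup_(i in F) O i].

Definition strong_rough_I_cluster {dS : measure_display} {S : measurableType dS}
  (P : probability S R) {U : Type} (d : U -> U -> R)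
  (I : set (set nat)) (r : R) (X : nat -> S -> U) : set (S -> U) :=
  [set Y | random_var d Y /\
     forall eps delta : R, 0 < eps -> 0 < delta ->
       ~ I [set n | lte (1 - delta)%:E (P [set s | d (X n s) (Y s) < r + eps])]].

End Defs.

Definition is_ideal (I : set (set nat)) : Prop :=
  [/\ I set0,
      forall A B, I A -> I B -> I (A `|` B) &
      forall A B, B `<=` A -> I A -> I B].

From HB Require Import structures.
From mathcomp Require Import all_boot all_order all_algebra.
From mathcomp Require Import all_classical all_reals all_analysis.
From mathcomp Require Import lra.
Import Order.TTheory GRing.Theory Num.Theory.
Local Open Scope classical_set_scope.
Local Open Scope ring_scope.

(* If there were no strong rough I-cluster point, every Y in B would come with
   eps, delta > 0 such that the set of n with P(d(X_n, Y) < r + eps) > 1 - delta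
   belongs to I.  Since rho(X_n, Y) < e forces P(d(X_n, Y) <= e) >= 1 - e, every
   X_n in the Ky Fan ball of radius min(eps, delta) around Y falls in that set.
   Finitely many such balls cover the compact B, so {n | X_n in B} lies in a
   finite union of members of I, hence in I.  Separability of U is what makes the
   events {d(Y, Z) > a} measurable. *)

Lemma ideal_bigcup_finite {I : set (set nat)} {T : Type} {F : set T}
    {G : T -> set nat} :
  is_ideal I -> finite_set F -> (forall y, F y -> I (G y)) ->
  I (\bigcup_(y in F) G y).
Proof.
case=> I0 IU _ finF FG; rewrite -(@bigsetU_fset_set _ {classic T}) // big_seq.
by apply: big_ind => // y; rewrite in_fset_set // inE; exact: FG.
Qed.

Lemma bigcup_countable_measurable d (T : measurableType d) (V : Type)
    (D : set V) (F : V -> set T) :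
  countable D -> (forall q, D q -> measurable (F q)) ->
  measurable (\bigcup_(q in D) F q).
Proof.
move=> /pfcard_geP[->|/surjfunPex[f ->]] mF; first by rewrite bigcup_set0.
by rewrite bigcup_image; apply: bigcupT_measurable => n; apply: mF; exists n.
Qed.

Section metric.
Context {R : realType} {U : Type} {d : U -> U -> R} (hd : is_metric d).

Lemma metric_sym x y : d x y = d y x. Proof. by case: hd. Qed.
Lemma metric_triangle x y z : d x z <= d x y + d y z. Proof. by case: hd. Qed.
Lemma metric_xx x : d x x = 0. Proof. by case: hd => _ dP _ _; exact/dP. Qed.

Lemma metric_open_lt c q : metric_open d [set u | d u q < c].
Proof.
move=> u /= uq; exists (c - d u q) => [|v]; first by rewrite subr_gt0.
by have := metric_triangle v u q; rewrite (metric_sym v u); lra.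
Qed.

Lemma metric_open_gt c q : metric_open d [set u | c < d q u].
Proof.
move=> u /= qu; exists (d q u - c) => [|v]; first by rewrite subr_gt0.
by have := metric_triangle q v u; rewrite (metric_sym v u); lra.
Qed.

Context {dS : measure_display} {S : measurableType dS}.

Lemma random_var_open_measurable {Y : S -> U} {A : set U} :
  random_var d Y -> metric_open d A -> measurable (Y @^-1` A).
Proof. by move=> Ymeas Aopen; apply: Ymeas; exact: sub_sigma_algebra. Qed.

Hypothesis hsep : separable_metric d.

Lemma measurable_dist_gt {Y Z : S -> U} a : random_var d Y -> random_var d Z ->
  measurable [set s | a < d (Y s) (Z s)].
Proof.
move=> Ymeas Zmeas; have [D [Dcount Ddense]] := hsep.
pose t m : R := m.+1%:R^-1.
have t_gt0 m : 0 < t m by rewrite invr_gt0.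
(* [Y s] is [t m]-close to some [q] in [D] that is still [a + t m]-far from [Z s]. *)
have -> : [set s | a < d (Y s) (Z s)] = \bigcup_m \bigcup_(q in D)
    (Y @^-1` [set u | d u q < t m] `&` Z @^-1` [set u | a + t m < d q u]).
  apply/seteqP; split => s /= => [aYZ|[m _ [q Dq [/= Yq qZ]]]].
    have /ltr_add_invr[m] : 0 < (d (Y s) (Z s) - a) / 2 by lra.
    rewrite add0r -/(t m) => tm; have [q Dq Yq] := Ddense (Y s) _ (t_gt0 m).
    exists m => //; exists q => //; split => //=.
    by have := metric_triangle (Y s) q (Z s); lra.
  by have := metric_triangle q (Y s) (Z s); rewrite (metric_sym q (Y s)); lra.
apply: bigcupT_measurable => m; apply: bigcup_countable_measurable => // q _.
by apply: measurableI; apply: random_var_open_measurable => //;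
  [exact: metric_open_lt|exact: metric_open_gt].
Qed.

Lemma measurable_dist_lt {Y Z : S -> U} c : random_var d Y -> random_var d Z ->
  measurable [set s | d (Y s) (Z s) < c].
Proof.
move=> Ymeas Zmeas; pose t m : R := m.+1%:R^-1.
have -> : [set s | d (Y s) (Z s) < c] =
    \bigcup_m ~` [set s | c - t m < d (Y s) (Z s)].
  apply/seteqP; split => s /= => [/ltr_add_invr[m]|[m _ /negP]].
    by rewrite -/(t m) => YZ; exists m => //=; apply/negP; rewrite -leNgt; lra.
  have : 0 < t m by rewrite invr_gt0.
  by rewrite -leNgt; lra.
apply: bigcupT_measurable => m; apply: measurableC.
exact: measurable_dist_gt.
Qed.

Variable P : probability S R.

Definition ky_fan_bounds (Y Z : S -> U) : set R :=
  [set e : R | 0 < e /\ lee (P [set s | e < d (Y s) (Z s)]) e%:E].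

Lemma ky_fan_le (Y Z : S -> U) e : ky_fan_bounds Y Z e -> ky_fan P d Y Z <= e.
Proof. by apply: ge_inf; exists 0 => f [/ltW]. Qed.

Lemma ky_fan_ltP {Y Z : S -> U} {a : R} : random_var d Y -> random_var d Z ->
  ky_fan P d Y Z < a -> exists2 e, ky_fan_bounds Y Z e & e < a.
Proof.
move=> Ymeas Zmeas; apply: inf_lt; exists 1; split => //.
exact/probability_le1/measurable_dist_gt.
Qed.

Lemma ky_fan_sym (Y Z : S -> U) : ky_fan P d Y Z = ky_fan P d Z Y.
Proof.
by rewrite /ky_fan; under eq_fun do under eq_set do rewrite metric_sym.
Qed.

Lemma ky_fan_xx_lt (Y : S -> U) (e : R) : 0 < e -> ky_fan P d Y Y < e.
Proof.
move=> e_gt0; apply: (le_lt_trans (@ky_fan_le Y Y (e / 2) _)); last lra.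
split; first lra.
have -> : [set s | e / 2 < d (Y s) (Y s)] = set0.
  by apply/seteqP; split => s //=; rewrite metric_xx; lra.
by rewrite measure0 lee_fin; lra.
Qed.

Lemma ky_fan_triangle {Y Z W : S -> U} :
  random_var d Y -> random_var d Z -> random_var d W ->
  ky_fan P d Y W <= ky_fan P d Y Z + ky_fan P d Z W.
Proof.
move=> Ymeas Zmeas Wmeas; apply/ler_addgt0Pr => eps eps_gt0.
have [e1 [e1_gt0 Pe1] e1_lt] : exists2 e, ky_fan_bounds Y Z e &
    e < ky_fan P d Y Z + eps / 2 by apply: ky_fan_ltP => //; lra.
have [e2 [e2_gt0 Pe2] e2_lt] : exists2 e, ky_fan_bounds Z W e &
    e < ky_fan P d Z W + eps / 2 by apply: ky_fan_ltP => //; lra.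
apply: (@le_trans _ _ (e1 + e2)); last lra.
apply: ky_fan_le; split; first lra.
rewrite EFinD; apply: le_trans (leeD Pe1 Pe2).
apply: le_trans (measureU2 _ _ _); [|exact: measurable_dist_gt..].
apply: le_measure; rewrite ?inE;
  [exact: measurable_dist_gt|apply: measurableU; exact: measurable_dist_gt|].
move=> s /= YW; apply: contrapT; rewrite -/(_ \/ _) => /not_orP[].
move=> /negP; rewrite -leNgt => YZ /negP; rewrite -leNgt => ZW.
by have := metric_triangle (Y s) (Z s) (W s); lra.
Qed.

Lemma ky_fan_ball_open (Y : S -> U) e :
  random_var d Y -> rho_open P d [set Z | ky_fan P d Y Z < e].
Proof.
move=> Ymeas Z Zmeas /= YZ; exists (e - ky_fan P d Y Z) => [|W Wmeas ZW].
  by rewrite subr_gt0.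
by have := ky_fan_triangle Ymeas Zmeas Wmeas; lra.
Qed.

Lemma rho_compact_ball_cover {B : set (S -> U)} {rad : {Y | B Y} -> R} :
  rho_compact_class P d B -> (forall Y, 0 < rad Y) ->
  exists2 F : set {Y | B Y}, finite_set F &
    B `<=` \bigcup_(Y in F) [set Z | ky_fan P d (sval Y) Z < rad Y].
Proof.
move=> [B_rv _ B_compact] rad_gt0.
have [|F [F_fin B_cover]] := B_compact _ _ (fun Y => ky_fan_ball_open _ (rad Y)
  (B_rv _ (svalP Y))); last by exists F.
by move=> Z BZ; exists (exist _ Z BZ) => //; exact: ky_fan_xx_lt.
Qed.

Lemma ky_fan_lt_prob {Y Z : S -> U} e t : random_var d Y -> random_var d Z ->
  ky_fan P d Y Z < e -> e <= t ->
  lte (1 - e)%:E (P [set s | d (Y s) (Z s) < t]).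
Proof.
move=> Ymeas Zmeas /(ky_fan_ltP Ymeas Zmeas)[e' [_ Pe'] e'_lt] et.
have far_meas := measurable_dist_gt e' Ymeas Zmeas.
apply: (@lt_le_trans _ _ (P (~` [set s | e' < d (Y s) (Z s)]))).
  rewrite probability_setC //.
  move: Pe' (measure_ge0 P [set s | e' < d (Y s) (Z s)]).
  case: (P _) => [p| |] //=; last by rewrite addey ?ltey.
  by rewrite !lee_fin -EFinB lte_fin; lra.
apply: le_measure; rewrite ?inE; [exact: measurableC|exact: measurable_dist_lt|].
by move=> s /= /negP; rewrite -leNgt; lra.
Qed.

End metric.

Theorem proposition3p9 (R : realType) (dS : measure_display) (S : measurableType dS)
  (P : probability S R) (U : Type) (d : U -> U -> R)
  (hd : is_metric d) (hsep : separable_metric d)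
  (I : set (set nat)) (hI : is_ideal I)
  (X : nat -> S -> U) (hX : forall n, random_var d (X n))
  (B : set (S -> U)) (hB : rho_compact_class P d B)
  (hBX : ~ I [set n | B (X n)]) :
  forall r : R, 0 < r -> strong_rough_I_cluster P d I r X !=set0.
Proof.
move=> r r_gt0; apply: contrapT => no_cluster; have [B_rv _ _] := hB.
pose near (Y : S -> U) (eps delta : R) :=
  [set n | lte (1 - delta)%:E (P [set s | d (X n s) (Y s) < r + eps])].
have /choice[w w_ok] : forall Y : {Y | B Y}, exists p : R * R,
    [/\ 0 < p.1, 0 < p.2 & I (near (sval Y) p.1 p.2)].
  move=> [Y BY]; apply: contrapT => Y_far; apply: no_cluster.
  exists Y; split => [|eps delta eps_gt0 delta_gt0 I_near]; first exact: B_rv.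
  by apply: Y_far; exists (eps, delta).
pose eta Y := Num.min (w Y).1 (w Y).2.
have eta_gt0 Y : 0 < eta Y by rewrite lt_min; case: (w_ok Y) => -> ->.
have [F F_fin B_cover] := rho_compact_ball_cover hd hsep P hB eta_gt0.
have near_ideal Y : I (near (sval Y) (w Y).1 (w Y).2) by case: (w_ok Y).
apply: hBX; have [_ _ I_sub] := hI.
apply: (I_sub _ _ _ (ideal_bigcup_finite hI F_fin (fun Y _ => near_ideal Y))).
move=> n /B_cover[Y FY /=]; rewrite ky_fan_sym // => XnY; exists Y => //.
have [eps_gt0 _ _] := w_ok Y; have Y_rv := B_rv _ (svalP Y).
rewrite /near /=; apply: (le_lt_trans _
  (ky_fan_lt_prob hd hsep P _ _ (hX n) Y_rv XnY _)).
  by rewrite lee_fin lerB // ge_min lexx orbT.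
by rewrite /eta ge_min; apply/orP; left; lra.
Qed.
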